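(* For every $\ell \in \mathbb{N}$ and every $k$-tree $G$ there exists a $k$-tree $\bar{G}$ such that every $\ell$-local book embedding of $\bar{G}$ contains a forest embedding of $G$.
   Context: All graphs are finite and simple; $k \ge 1$ is an integer. A graph is a $k$-tree if it is isomorphic to $K_{k+1}$, or it is obtained from a smaller $k$-tree $G'$ by adding one new vertex whose neighborhood in $G'$ is a clique of order $k$. A linear embedding of $G=(V,E)$ is a pair $(\prec,\mathcal{P})$ where $\prec$ is a total ordering of $V$ and $\mathcal{P}$ is a partition of $E$ into parts called pages. Two edges $uv, xy$ with $u\prec v$, $x \prec y$ cross if $u \prec x \prec v \prec y$ or $x \prec u \prec y \prec v$. A book embedding is a linear embedding in which no two crossing edges lie on the same page. For a book embedding and a vertex $v$, $\mathcal{P}_v$ is the set of pages containing an edge incident to $v$; the embedding is $\ell$-local if $|\mathcal{P}_v| \le \ell$ for all $v$. A linear embedding is a forest embedding if the edges on each page form a forest. A book embedding $(\prec,\mathcal{P})$ of a graph $\bar G = (\bar V, \bar E)$ contains a forest embedding of $G$ if there is a set $X \subseteq \bar V$ with $G \cong \bar G[X]$ such that the restriction of $(\prec,\mathcal{P})$ to $\bar G[X]$ (the ordering $\prec$ restricted to $X$ and the partition of $E(\bar G[X])$ induced by the pages) is a forest embedding of $\bar G[X]$. *)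

From mathcomp Require Import all_boot.
Set Implicit Arguments. Unset Strict Implicit. Unset Printing Implicit Defensive.

Definition simple_graph (T : finType) (e : rel T) : Prop :=
  symmetric e /\ irreflexive e.

Definition is_clique (T : finType) (e : rel T) (S : {set T}) : Prop :=
  forall x y, x \in S -> y \in S -> x != y -> e x y.

Inductive ktree_on (T : finType) (e : rel T) (k : nat) : {set T} -> Prop :=
| ktree_base (S : {set T}) : #|S| = k.+1 -> is_clique e S -> ktree_on e k S
| ktree_step (S : {set T}) (v : T) : v \in S -> ktree_on e k (S :\ v) ->
    #|[set u in S | e v u]| = k -> is_clique e [set u in S | e v u] ->
    ktree_on e k S.

Definition is_ktree (T : finType) (e : rel T) (k : nat) : Prop :=
  simple_graph e /\ ktree_on e k [set: T].

(* Linear embedding: total order given by an injective map ord : T -> nat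
   (u precedes v iff ord u < ord v); partition of edges into pages given by
   a page label p u v (symmetric on edges). *)
Definition linear_embedding (T : finType) (e : rel T)
  (ord : T -> nat) (p : T -> T -> nat) : Prop :=
  injective ord /\ (forall u v, e u v -> p u v = p v u).

Definition crossing (T : finType) (ord : T -> nat) (u v x y : T) : bool :=
  (ord u < ord x < ord v) && (ord v < ord y).

Definition book_embedding (T : finType) (e : rel T)
  (ord : T -> nat) (p : T -> T -> nat) : Prop :=
  linear_embedding e ord p /\
  forall u v x y, e u v -> e x y -> crossing ord u v x y -> p u v != p x y.

Definition pages_at (T : finType) (e : rel T) (p : T -> T -> nat) (v : T)
  : seq nat := undup [seq p v u | u <- enum T & e v u].

Definition local_book_embedding (l : nat) (T : finType) (e : rel T)
  (ord : T -> nat) (p : T -> T -> nat) : Prop :=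
  book_embedding e ord p /\ forall v, size (pages_at e p v) <= l.

Definition acyclic_on (T : finType) (r : rel T) (X : {set T}) : Prop :=
  ~ exists s : seq T, [/\ uniq s, 2 < size s, all (mem X) s & cycle r s].

Definition page_rel (T : finType) (e : rel T) (p : T -> T -> nat) (i : nat)
  : rel T := fun x y => e x y && (p x y == i).

Definition contains_forest_embedding (T : finType) (e : rel T)
  (Tb : finType) (eb : rel Tb) (ord : Tb -> nat) (p : Tb -> Tb -> nat) : Prop :=
  exists f : T -> Tb,
    [/\ injective f, (forall a b, e a b = eb (f a) (f b)) &
        forall i, acyclic_on (page_rel eb p i) (f @: T)].

From mathcomp Require Import all_boot zify.
Set Implicit Arguments. Unset Strict Implicit. Unset Printing Implicit Defensive.

(* Stacking 2k^2 l + 1 new vertices onto every k-clique K of a k-tree gives a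
   k-tree. In an l-local book embedding of it, some new vertex w sends its k
   edges to K on pairwise distinct pages: otherwise, by pigeonhole on the pair
   {c1, c2} of K it meets twice and on the page (one of the <= l pages at c1),
   three new vertices would form with c1, c2 a K_{2,3} on one page, and K_{2,3}
   has no one-page book embedding. Such a w has at most one neighbour per page
   in any vertex set containing K, so adding it keeps every page a forest.
   Iterating from K_{k+1} yields a host forcing a forest (k+1)-clique, and then
   following a construction sequence of the given k-tree, one stacking step per
   vertex, yields a host forcing a forest embedding of the whole k-tree. *)

Lemma acyclic_onS (T : finType) (r : rel T) (X Y : {set T}) :
  X \subset Y -> acyclic_on r Y -> acyclic_on r X.
Proof.
move=> sXY acY [s [us s_gt2 sX cyc_s]]; apply: acY; exists s; split=> //.
by apply/allP=> x /(allP sX); apply: (subsetP sXY).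
Qed.

Lemma acyclic_on_imset (T U : finType) (r : rel T) (r' : rel U) (f : T -> U)
    (X : {set T}) :
  injective f -> (forall a b, r' (f a) (f b) = r a b) ->
  acyclic_on r X -> acyclic_on r' (f @: X).
Proof.
move=> f_inj fr acX [s [us s_gt2 sX cyc_s]]; apply: acX.
pose g u := [pick a | f a == u].
have gK : ocancel g f by move=> u; rewrite /g; case: pickP => //= a /eqP.
have fgs : map f (pmap g s) = s.
  rewrite (pmap_filter gK); apply/all_filterP/allP => _ /(allP sX) /imsetP [a _ ->].
  by rewrite /g; case: pickP => // /(_ a); rewrite eqxx.
exists (pmap g s); split.
- by rewrite -(map_inj_uniq f_inj) fgs.
- by rewrite -(size_map f) fgs.
- by apply/allP => a; rewrite -(mem_map f_inj) fgs => /(allP sX); rewrite /= mem_imset.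
- by rewrite -(eq_cycle fr) -cycle_map fgs.
Qed.

(* A cycle through [w] leaves it along two distinct neighbours. *)
Lemma acyclic_on_setU1 (T : finType) (r : rel T) (X : {set T}) (w : T) :
  (forall a, r a w = r w a) -> {in X &, forall a b, r w a -> r w b -> a = b} ->
  acyclic_on r X -> acyclic_on r (w |: X).
Proof.
move=> r_sym w_nb acX [s [us s_gt2 sX cyc_s]].
have [ws|wNs] := boolP (w \in s); last first.
  apply: acX; exists s; split=> //; apply/allP=> x xs.
  by move: (allP sX x xs); rewrite /= !inE; case: eqP => // xw; rewrite -xw xs in wNs.
case: (rot_to ws) => i s' def_s.
have us' : uniq (w :: s') by rewrite -def_s rot_uniq.
have inX x : x \in s' -> x \in X.
  move=> xs'; have : x \in s by rewrite -(mem_rot i) def_s inE xs' orbT.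
  move/(allP sX); rewrite /= !inE; case: eqP => // xw.
  by move: us'; rewrite /= -xw xs'.
have : 2 < size (w :: s') by rewrite -def_s size_rot.
have : cycle r (w :: s') by rewrite -def_s rot_cycle.
case: s' {def_s} us' inX => [|a [|b t]] //= /and3P [_ aN _] inX /andP [rwa].
rewrite rcons_path => /and3P [_ _ rzw] _.
have zs : last b t \in b :: t by apply: mem_last.
have aX : a \in X by apply: inX; rewrite inE eqxx.
have zX : last b t \in X by apply: inX; rewrite inE zs orbT.
have := w_nb a (last b t) aX zX rwa; rewrite -r_sym => /(_ rzw) az.
by rewrite az zs in aN.
Qed.

Lemma is_cliqueS (T : finType) (e : rel T) (A B : {set T}) :
  A \subset B -> is_clique e B -> is_clique e A.
Proof. by move=> sAB clB x y /(subsetP sAB) xB /(subsetP sAB); apply: clB. Qed.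

Lemma is_clique_in_imset (T U : finType) (e : rel T) (eb : rel U) (f : T -> U)
    (S : {set T}) :
  {in S &, injective f} -> {in S &, forall a b, e a b = eb (f a) (f b)} ->
  is_clique e S -> is_clique eb (f @: S).
Proof.
move=> f_inj fe clS _ _ /imsetP [a aS ->] /imsetP [b bS ->] fab.
by rewrite -fe // clS //; apply: contraNneq fab => ->.
Qed.

Definition kclique (T : finType) (e : rel T) (k : nat) (K : {set T}) : bool :=
  (#|K| == k) && [forall x in K, forall y in K, (x != y) ==> e x y].

Lemma kcliqueP (T : finType) (e : rel T) (k : nat) (K : {set T}) :
  reflect (#|K| = k /\ is_clique e K) (kclique e k K).
Proof.
apply: (iffP andP) => [[/eqP cK /forall_inP clK] | [cK clK]].
  by split=> // x y xK yK; move: (clK x xK) => /forall_inP /(_ y yK) /implyP.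
split; first exact/eqP.
by apply/forall_inP => x xK; apply/forall_inP => y yK; apply/implyP; apply: clK.
Qed.

Lemma ktree_on_imset (T U : finType) (e : rel T) (eb : rel U) (k : nat)
    (f : T -> U) (S : {set T}) :
  injective f -> (forall a b, e a b = eb (f a) (f b)) ->
  ktree_on e k S -> ktree_on eb k (f @: S).
Proof.
move=> f_inj fe; elim=> {S} [S cS clS | S v vS _ IH cN clN].
  apply: ktree_base; first by rewrite card_imset.
  by apply: is_clique_in_imset clS; apply: in2W.
have N_f : [set u in f @: S | eb (f v) u] = f @: [set u in S | e v u].
  apply/setP=> u; apply/idP/imsetP => [|[a + ->]]; rewrite !inE.
    by case/andP=> /imsetP [a aS ->]; rewrite -fe => eva; exists a; rewrite // inE aS.
  by case/andP=> aS eva; rewrite mem_imset // -fe aS.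
apply: (ktree_step (v := f v)); first by rewrite mem_imset.
- by rewrite -{1}(setD1K vS) imsetU1 setU1K // mem_imset // setD11.
- by rewrite N_f card_imset.
- by rewrite N_f; apply: is_clique_in_imset clN; apply: in2W.
Qed.

Lemma ktree_on_setU1 (T : finType) (e : rel T) (k : nat) (S : {set T}) (v : T) :
  v \notin S -> ktree_on e k S ->
  #|[set u in v |: S | e v u]| = k -> is_clique e [set u in v |: S | e v u] ->
  ktree_on e k (v |: S).
Proof. by move=> vNS kS; apply: ktree_step; rewrite ?setU11 ?setU1K. Qed.

Lemma ktree_on_attach (T : finType) (e : rel T) (k : nat) (S W : {set T}) :
  ktree_on e k S -> [disjoint S & W] -> {in W &, forall u v, ~~ e u v} ->
  {in W, forall w, #|[set u in S | e w u]| = k /\ is_clique e [set u in S | e w u]} ->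
  ktree_on e k (S :|: W).
Proof.
move=> kS dSW indW cliqueW; have [n] := ubnP #|W|.
elim: n W dSW indW cliqueW => // n IH W dSW indW cliqueW ltWn.
have [->|[w wW]] := set_0Vmem W; first by rewrite setU0.
have sW'W : W :\ w \subset W by apply: subD1set.
have N_w : [set u in w |: (S :|: W :\ w) | e w u] = [set u in S | e w u].
  apply/setP=> u; rewrite !inE; case: (boolP (u \in W)) => uW.
    by rewrite (negbTE (indW _ _ wW uW)) !andbF.
  by rewrite andbF orbF; case: eqP => // uw; rewrite uw wW in uW.
have [cN clN] := cliqueW w wW.
rewrite -(setD1K wW) setUCA; apply: ktree_on_setU1; rewrite ?N_w //.
- rewrite !inE negb_or eqxx /= andbT; apply: contraTN wW => wS.
  by rewrite (disjointFr dSW wS).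
apply: IH; first by apply: disjointWr dSW.
- by move=> u v /(subsetP sW'W) uW /(subsetP sW'W); apply: indW.
- by move=> u /(subsetP sW'W); apply: cliqueW.
- by rewrite (cardsD1 w W) wW add1n ltnS in ltWn.
Qed.

Lemma local_book_embedding_induced (l : nat) (T U : finType) (e : rel T) (eb : rel U)
    (f : T -> U) (ord : U -> nat) (p : U -> U -> nat) :
  injective f -> (forall a b, e a b = eb (f a) (f b)) ->
  local_book_embedding l eb ord p ->
  local_book_embedding l e (ord \o f) (fun a b => p (f a) (f b)).
Proof.
move=> f_inj fe [[[ord_inj p_sym] nc] loc]; split; [split; [split|] |].
- by move=> a b /ord_inj /f_inj.
- by move=> a b; rewrite fe; apply: p_sym.
- by move=> u v x y; rewrite !fe; apply: nc.
move=> v; apply: leq_trans (loc (f v)); apply: uniq_leq_size; first exact: undup_uniq.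
move=> i; rewrite !mem_undup => /mapP [u]; rewrite mem_filter mem_enum andbT => evu ->.
by apply/mapP; exists (f u); rewrite // mem_filter mem_enum andbT -fe.
Qed.

Lemma book_embedding_noncrossing (T : finType) (e : rel T) (ord : T -> nat)
    (p : T -> T -> nat) (i : nat) (u v x y : T) :
  book_embedding e ord p -> page_rel e p i u v -> page_rel e p i x y ->
  ~~ crossing ord u v x y.
Proof.
move=> [_ nc] /andP [euv /eqP puv] /andP [exy /eqP pxy]; apply/negP => cr.
by move: (nc u v x y euv exy cr); rewrite puv pxy eqxx.
Qed.

Section NonCrossing.
Variables (T : finType) (o : T -> nat) (H : rel T).
Hypothesis H_noncrossing : forall u v x y, H u v -> H x y -> ~~ crossing o u v x y.

(* Two common neighbours of [a] and [b] lying on the same side of the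
   chord [o a, o b] force two crossing edges. *)
Lemma noncrossing_K22_sides (a b x y : T) :
  (forall h t, h \in [:: a; b] -> t \in [:: x; y] -> H h t && H t h) ->
  uniq (map o [:: a; b; x; y]) -> o a < o b ->
  (o a < o x < o b) = (o a < o y < o b) -> False.
Proof.
move=> Hab; have E h t : h \in [:: a; b] -> t \in [:: x; y] -> H h t /\ H t h.
  by move=> ht tt; apply/andP/Hab.
have ma : a \in [:: a; b] by rewrite mem_head.
have mb : b \in [:: a; b] by rewrite !inE eqxx orbT.
have mx : x \in [:: x; y] by rewrite mem_head.
have my : y \in [:: x; y] by rewrite !inE eqxx orbT.
have [[ax xa] [ay ya]] := (E a x ma mx, E a y ma my).
have [[bx xb] [by_ yb]] := (E b x mb mx, E b y mb my).
move: (H_noncrossing ay xb) (H_noncrossing xa yb) (H_noncrossing xb ay)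
      (H_noncrossing ax by_) (H_noncrossing ax yb) (H_noncrossing ya xb)
      (H_noncrossing yb ax) (H_noncrossing ay bx).
clear -o; rewrite /crossing /= !inE; lia.
Qed.

Lemma noncrossing_K23_free (a b x y z : T) :
  (forall h t, h \in [:: a; b] -> t \in [:: x; y; z] -> H h t && H t h) ->
  uniq (map o [:: a; b; x; y; z]) -> False.
Proof.
wlog lt_ab : a b / o a < o b => [W Hab o_uniq | Hab o_uniq].
  have [lt_ab|lt_ba|eq_ab] := ltngtP (o a) (o b); first exact: (W a b).
    apply: (W b a) => // [h t hba|].
      by apply: Hab; move: hba; rewrite !inE orbC.
    by move: o_uniq; rewrite /= !inE; lia.
  by move: o_uniq; rewrite /= !inE eq_ab eqxx.
have K22 u v : u \in [:: x; y; z] -> v \in [:: x; y; z] ->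
    uniq (map o [:: a; b; u; v]) -> (o a < o u < o b) = (o a < o v < o b) -> False.
  move=> uS vS o_uniq4; apply: (noncrossing_K22_sides _ o_uniq4 lt_ab).
  by move=> h t hab; rewrite !inE => /orP [] /eqP ->; apply: Hab.
have [xS yS zS] : [/\ x \in [:: x; y; z], y \in [:: x; y; z] & z \in [:: x; y; z]].
  by rewrite !inE !eqxx !orbT.
have uniq4 : [/\ uniq (map o [:: a; b; x; y]), uniq (map o [:: a; b; y; z])
                & uniq (map o [:: a; b; x; z])].
  by split; move: o_uniq; clear; rewrite /= !inE; lia.
case: uniq4 => /(K22 x y xS yS) Kxy /(K22 y z yS zS) Kyz /(K22 x z xS zS) Kxz.
move: Kxy Kyz Kxz.
case: (o a < o x < o b); case: (o a < o y < o b); case: (o a < o z < o b)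
  => Kxy Kyz Kxz; by [apply: Kxy | apply: Kyz | apply: Kxz].
Qed.

End NonCrossing.

Lemma book_embedding_K23_free (T : finType) (e : rel T) (ord : T -> nat)
    (p : T -> T -> nat) (i : nat) (a b x y z : T) :
  simple_graph e -> book_embedding e ord p -> a != b -> uniq [:: x; y; z] ->
  (forall t h, t \in [:: x; y; z] -> h \in [:: a; b] -> e t h && (p t h == i)) -> False.
Proof.
move=> [e_sym e_irr] emb ab xyz adj; have [[ord_inj p_sym] _] := emb.
have page2 h t : h \in [:: a; b] -> t \in [:: x; y; z] ->
    page_rel e p i h t && page_rel e p i t h.
  move=> hab txyz; case/andP: (adj t h txyz hab) => eth /eqP pth.
  by rewrite /page_rel e_sym eth -(p_sym t h eth) pth eqxx.
apply: (@noncrossing_K23_free _ ord (page_rel e p i) _ a b x y z page2).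
  by move=> u v s t; apply: book_embedding_noncrossing.
have hN h : h \in [:: a; b] -> h \notin [:: x; y; z].
  by move=> hab; apply/negP => hS; case/andP: (adj h h hS hab); rewrite e_irr.
rewrite map_inj_uniq // (cons_uniq a) (cons_uniq b) xyz in_cons negb_or ab !hN //;
by rewrite !inE eqxx ?orbT.
Qed.

Lemma card_le_fibers (J : finType) (X : eqType) (g : J -> X) (n : nat) (s : seq X)
    (A : {set J}) :
  {in A, forall j, g j \in s} -> {in s, forall x, #|A :&: [set j | g j == x]| <= n} ->
  #|A| <= n * size s.
Proof.
elim: s A => [|x s IH] A gA fibA.
  by rewrite muln0 leqn0 cards_eq0; apply/eqP/setP => j; rewrite inE; apply/negP => /gA.
rewrite mulnS -(cardsID [set j | g j == x] A) leq_add ?fibA ?mem_head //.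
apply: IH => [j | y ys].
  by rewrite !inE => /andP [/negPf gjx /gA]; rewrite inE gjx.
apply: leq_trans (fibA y _); last by rewrite inE ys orbT.
by apply/subset_leq_card/setSI/subsetDl.
Qed.

Lemma pigeonhole_fiber (J : finType) (X : eqType) (g : J -> X) (n : nat) (s : seq X) :
  (forall j, g j \in s) -> n * size s < #|J| -> exists x, n < #|[set j | g j == x]|.
Proof.
move=> gs; pose big x := n < #|[set j | g j == x]|.
have [/hasP [x _ big_x] _ | /hasPn small] := boolP (has big s); first by exists x.
rewrite ltnNge -cardsT (card_le_fibers (g := g)) // => x xs.
by rewrite setTI leqNgt small.
Qed.

(* If every copy [w j] met [K] twice on one page, three copies would meet the
   same pair [c1, c2] of [K] on the same page, i.e. in a K_{2,3}; the page is
   one of the at most [l] pages at [c1], hence the bound on [#|J|]. *)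
Lemma local_book_embedding_distinct_pages (l : nat) (T J : finType) (e : rel T)
    (ord : T -> nat) (p : T -> T -> nat) (K : {set T}) (w : J -> T) :
  simple_graph e -> local_book_embedding l e ord p -> injective w ->
  (forall j c, c \in K -> e (w j) c) -> 2 * (#|K| * #|K| * l) < #|J| ->
  exists j, {in K &, injective (p (w j))}.
Proof.
move=> e_simple [emb loc] w_inj wK bigJ.
have [[e_sym _] [[_ p_sym] _]] := (e_simple, emb).
pose bad j (c : T * T) := [&& c \in setX K K, c.1 != c.2 & p (w j) c.1 == p (w j) c.2].
have [j /existsPn good | all_bad] := pickP (fun j => ~~ [exists c, bad j c]).
  exists j => c1 c2 c1K c2K pc; apply/eqP; apply: contraNT (good (c1, c2)) => c12.
  by rewrite /bad in_setX c1K c2K c12 pc eqxx.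
have bad_ex j : exists c, bad j c by apply/existsP/negbFE/all_bad.
pose c_of j := xchoose (bad_ex j).
have c_of_bad j : bad j (c_of j) := xchooseP (bad_ex j).
have c_ofK j : c_of j \in setX K K by case/and3P: (c_of_bad j).
have c_of_page j : p (w j) (c_of j).1 = p (w j) (c_of j).2.
  by case/and3P: (c_of_bad j) => _ _ /eqP.
have page_at j c : c \in K -> p (w j) c \in pages_at e p c.
  move=> cK; rewrite mem_undup; apply/mapP; exists (w j); last exact: p_sym (wK j c cK).
  by rewrite mem_filter mem_enum e_sym wK.
pose g j := (c_of j, index (p (w j) (c_of j).1) (pages_at e p (c_of j).1)).
have [[[c1 c2] i]] : exists d, 2 < #|[set j | g j == d]|.
  apply: (pigeonhole_fiber (s := [seq (c, i) | c <- enum (setX K K), i <- iota 0 l])).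
    move=> j; rewrite allpairs_f ?mem_enum ?mem_iota //=.
    apply: leq_trans (loc (c_of j).1); rewrite index_mem page_at //.
    by case: (c_of j) (c_ofK j) => c c' /setXP [].
  by rewrite size_allpairs size_iota -cardE cardsX.
case/card_gt2P => [j1 [j2 [j3 [[m1 m2 m3] [n12 n23 n31]]]]].
have [c1K c2K c12] : [/\ c1 \in K, c2 \in K & c1 != c2].
  move: m1; rewrite inE => /eqP [cj _].
  by case/and3P: (c_of_bad j1); rewrite cj in_setX => /andP [-> ->].
pose pi := nth 0 (pages_at e p c1) i.
have on_page j : j \in [set j | g j == (c1, c2, i)] ->
    forall h, h \in [:: c1; c2] -> e (w j) h && (p (w j) h == pi).
  rewrite inE => /eqP [cj ij] h; rewrite !inE.
  have pi_j : p (w j) c1 = pi by rewrite /pi -ij cj /= nth_index ?page_at.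
  have pi_j2 : p (w j) c2 = pi by rewrite -pi_j; move: (c_of_page j); rewrite cj.
  by case/orP=> /eqP ->; rewrite wK // ?pi_j ?pi_j2 eqxx.
exfalso; apply: (@book_embedding_K23_free _ e ord p pi c1 c2 (w j1) (w j2) (w j3)) => //.
  by rewrite /= !inE !(inj_eq w_inj) negb_or n12 n23 eq_sym n31.
by move=> t h; rewrite !inE => /or3P [] /eqP -> hc; apply: on_page => //; rewrite !inE.
Qed.

Lemma card_le_injection (T U : finType) (S : {set T}) (Y : {set U}) (y0 : U) :
  #|S| <= #|Y| -> exists2 f : T -> U, {in S &, injective f} & f @: S \subset Y.
Proof.
move=> le_SY; have idx_lt u : u \in S -> index u (enum S) < #|Y|.
  by move=> uS; apply: leq_trans le_SY; rewrite cardE index_mem mem_enum.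
exists (fun u => nth y0 (enum Y) (index u (enum S))).
  move=> u v uS vS /eqP; rewrite nth_uniq ?enum_uniq -?cardE ?idx_lt // => /eqP uv.
  by rewrite -(nth_index u (_ : u \in enum S)) ?mem_enum // uv nth_index ?mem_enum.
by apply/subsetP => _ /imsetP [u uS ->]; rewrite -mem_enum mem_nth // -cardE idx_lt.
Qed.

Section Stacking.
Variables (T : finType) (e : rel T) (k l : nat).

Definition stack_copies := (2 * (k * k * l)).+1.
Definition stack_slot := ({K : {set T} | kclique e k K} * 'I_stack_copies)%type.
Definition stacked : finType := (T + stack_slot)%type.

Definition stack_rel : rel stacked := fun x y =>
  match x, y with
  | inl a, inl b => e a b
  | inl a, inr s | inr s, inl a => a \in sval s.1
  | inr _, inr _ => false
  end.

Local Notation inlS := (@inl T stack_slot).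

Lemma inr_notin_inl_imset (s : stack_slot) (X : {set T}) : inr s \notin inlS @: X.
Proof. by apply/imsetP => [[]]. Qed.

Lemma stack_simple : simple_graph e -> simple_graph stack_rel.
Proof.
by move=> [e_sym e_irr]; split=> [[a|s] [b|s'] | [a|s]] //=; rewrite ?e_sym ?e_irr.
Qed.

Lemma card_stack_setU1 (s : stack_slot) (X : {set T}) : #|inr s |: inlS @: X| = #|X|.+1.
Proof. by rewrite cardsU1 inr_notin_inl_imset card_imset //; apply: inl_inj. Qed.

Lemma stack_clique (K : {K : {set T} | kclique e k K}) (j : 'I_stack_copies) :
  is_clique stack_rel (inr (K, j) |: inlS @: sval K).
Proof.
have /kcliqueP [_ clK] := svalP K.
move=> x y; rewrite !inE.
case/predU1P => [-> | /imsetP [a aK ->]]; case/predU1P => [-> | /imsetP [b bK ->]] //=.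
- by rewrite eqxx.
- by move=> ab; apply: clK => //; apply: contraNneq ab => ->.
Qed.

Lemma stack_ktree : is_ktree e k -> is_ktree stack_rel k.
Proof.
move=> [e_simple kt]; split; first exact: stack_simple.
pose S := inlS @: [set: T].
have inS x : (x \in S) = (if x is inl _ then true else false).
  case: x => [a|s]; last exact/negbTE/inr_notin_inl_imset.
  by rewrite mem_imset ?inE //; apply: inl_inj.
rewrite -(setUCr S); apply: ktree_on_attach.
- by apply: ktree_on_imset kt => //; apply: inl_inj.
- by rewrite disjoints_subset setCK.
- by move=> [a|s] [b|s']; rewrite !inE !inS.
move=> [a|s]; rewrite inE inS // => _.
have -> : [set u in S | stack_rel (inr s) u] = inlS @: sval s.1.
  apply/setP => [[a|s']]; rewrite !inE inS //= ?(negbTE (inr_notin_inl_imset _ _)) //.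
  by rewrite mem_imset //; apply: inl_inj.
have /kcliqueP [cK clK] := svalP s.1.
split; first by rewrite card_imset //; apply: inl_inj.
by apply: is_clique_in_imset clK => //; apply: in2W; apply: inl_inj.
Qed.

Lemma stack_forest_vertex (ord : stacked -> nat) (p : stacked -> stacked -> nat)
    (K : {K : {set T} | kclique e k K}) :
  simple_graph e -> local_book_embedding l stack_rel ord p ->
  exists j, forall X : {set T},
    (forall i, acyclic_on (page_rel e (fun a b => p (inl a) (inl b)) i) X) ->
    forall i, acyclic_on (page_rel stack_rel p i) (inr (K, j) |: inlS @: X).
Proof.
move=> e_simple emb; have /kcliqueP [cK _] := svalP K.
have st_simple := stack_simple e_simple; have [st_sym _] := st_simple.
have [j pages_inj] : exists j, {in inlS @: sval K &, injective (p (inr (K, j)))}.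
  apply: (local_book_embedding_distinct_pages st_simple emb) => [j j' [] //||].
    by move=> j _ /imsetP [a aK ->].
  by rewrite card_ord card_imset ?cK //; apply: inl_inj.
exists j => X acX i; have [[[_ p_sym] _] _] := emb.
apply: acyclic_on_setU1.
- move=> x; rewrite /page_rel st_sym.
  by case wx: (stack_rel _ x) => //=; rewrite p_sym.
- move=> _ _ /imsetP [a _ ->] /imsetP [b _ ->] /andP [wa /eqP pa] /andP [wb /eqP pb].
  by apply: pages_inj; rewrite ?mem_imset ?pa ?pb //; apply: inl_inj.
by apply: acyclic_on_imset (acX i) => //; apply: inl_inj.
Qed.

End Stacking.

Arguments stack_rel {T} e k l _ _.
Arguments stack_clique {T e k l} K j.

Lemma local_book_embedding_stack_inl (T : finType) (e : rel T) (k l : nat)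
    (ord : stacked e k l -> nat) (p : stacked e k l -> stacked e k l -> nat) :
  local_book_embedding l (stack_rel e k l) ord p ->
  local_book_embedding l e (ord \o inl) (fun a b => p (inl a) (inl b)).
Proof. by apply: local_book_embedding_induced => //; apply: inl_inj. Qed.

Lemma ktree_forces_forest_in_kclique (k l j : nat) : j <= k ->
  exists (Tb : finType) (eb : rel Tb), is_ktree eb k /\
  forall ord p, local_book_embedding l eb ord p ->
  exists K Y : {set Tb}, [/\ kclique eb k K, Y \subset K, #|Y| = j &
    forall i, acyclic_on (page_rel eb p i) Y].
Proof.
elim: j => [_ | j IH lt_jk].
  exists 'I_k.+1, (fun x y => x != y); split.
    split; first by split=> [x y | x]; rewrite /= ?eqxx // eq_sym.
    by apply: ktree_base; [rewrite cardsT card_ord | move=> x y].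
  move=> ord p _; exists [set~ ord0], set0; split; rewrite ?sub0set ?cards0 //.
    by apply/kcliqueP; split=> [|x y]; rewrite ?cardsC1 ?card_ord.
  move=> i [s [_ s_gt2 /allP s0 _]]; case: s s_gt2 s0 => // x s _.
  by move=> /(_ x (mem_head _ _)); rewrite /= inE.
have [Tb [eb [kt grow]]] := IH (ltnW lt_jk).
exists (stacked eb k l), (stack_rel eb k l); split; first exact: stack_ktree.
move=> ord p emb; have [eb_simple _] := kt.
have [K [Y [kK sYK cY acY]]] := grow _ _ (local_book_embedding_stack_inl emb).
have /kcliqueP [cK _] := kK.
have [r] : exists r, r \in K :\: Y.
  by apply/card_gt0P; rewrite cardsD (setIidPr sYK) cY cK subn_gt0.
rewrite inE => /andP [rNY rK].
have [jj forest] := stack_forest_vertex (exist _ K kK) eb_simple emb.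
pose w : stacked eb k l := inr (exist _ K kK, jj).
exists (w |: inl @: (K :\ r)), (w |: inl @: Y); split; last exact: forest.
- apply/kcliqueP; split; first by rewrite card_stack_setU1 -cK (cardsD1 r K) rK.
  apply: (is_cliqueS _ (stack_clique (exist _ K kK) jj)).
  by rewrite setUS // imsetS // subD1set.
- by rewrite setUS // imsetS // subsetD1 sYK.
- by rewrite card_stack_setU1 cY.
Qed.

Lemma ktree_forces_forest_clique (k l : nat) :
  exists (Tb : finType) (eb : rel Tb), is_ktree eb k /\
  forall ord p, local_book_embedding l eb ord p ->
  exists Y : {set Tb}, [/\ #|Y| = k.+1, is_clique eb Y &
    forall i, acyclic_on (page_rel eb p i) Y].
Proof.
have [Tb [eb [kt grow]]] := ktree_forces_forest_in_kclique l (leqnn k).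
exists (stacked eb k l), (stack_rel eb k l); split; first exact: stack_ktree.
move=> ord p emb; have [eb_simple _] := kt.
have [K [Y [kK sYK cY acY]]] := grow _ _ (local_book_embedding_stack_inl emb).
have /kcliqueP [cK _] := kK.
have YK : Y = K by apply/eqP; rewrite eqEcard sYK cY cK leqnn.
subst Y; have [jj forest] := stack_forest_vertex (exist _ K kK) eb_simple emb.
exists (inr (exist _ K kK, jj) |: inl @: K); split; last exact: forest.
- by rewrite card_stack_setU1 cK.
- exact: stack_clique.
Qed.

Definition forces_forest_embedding (T : finType) (e : rel T) (k l : nat)
    (S : {set T}) : Prop :=
  exists (Tb : finType) (eb : rel Tb), is_ktree eb k /\
  forall ord p, local_book_embedding l eb ord p ->
  exists f : T -> Tb, [/\ {in S &, injective f},
    {in S &, forall a b, e a b = eb (f a) (f b)} &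
    forall i, acyclic_on (page_rel eb p i) (f @: S)].

Lemma forces_forest_embedding_clique (T : finType) (e : rel T) (k l : nat)
    (S : {set T}) :
  irreflexive e -> #|S| = k.+1 -> is_clique e S -> forces_forest_embedding e k l S.
Proof.
move=> e_irr cS clS; have [Tb [eb [kt forest]]] := ktree_forces_forest_clique k l.
exists Tb, eb; split=> // ord p emb; have [[_ eb_irr] _] := kt.
have [Y [cY clY acY]] := forest _ _ emb.
have [y0 _] : exists y0, y0 \in Y by apply/card_gt0P; rewrite cY.
have le_SY : #|S| <= #|Y| by rewrite cS cY.
have [f f_inj fSY] := card_le_injection y0 le_SY.
exists f; split=> // [a b aS bS | i]; last exact: acyclic_onS fSY (acY i).
have [-> | ab] := eqVneq a b; first by rewrite e_irr eb_irr.
rewrite clS // clY ?(subsetP fSY) ?imset_f //.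
by apply: contraNneq ab => /f_inj ->.
Qed.

Lemma forces_forest_embedding_stack (T : finType) (e : rel T) (k l : nat)
    (S : {set T}) (v : T) :
  simple_graph e -> v \in S -> forces_forest_embedding e k l (S :\ v) ->
  #|[set u in S | e v u]| = k -> is_clique e [set u in S | e v u] ->
  forces_forest_embedding e k l S.
Proof.
move=> [e_sym e_irr] vS [Tb [eb [kt forest]]] cN clN.
exists (stacked eb k l), (stack_rel eb k l); split; first exact: stack_ktree.
move=> ord p emb; have [eb_simple _] := kt.
have [f [f_inj fe f_forest]] := forest _ _ (local_book_embedding_stack_inl emb).
set N := [set u in S | e v u].
have sNS : N \subset S :\ v.
  apply/subsetP => u; rewrite !inE => /andP [-> evu].
  by case: eqP evu => // ->; rewrite e_irr.
have N_inj : {in N &, injective f}.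
  by move=> a b /(subsetP sNS) aS /(subsetP sNS) bS; apply: f_inj.
have kN : kclique eb k (f @: N).
  apply/kcliqueP; split; first by rewrite card_in_imset.
  by apply: is_clique_in_imset clN => // a b /(subsetP sNS) aS /(subsetP sNS); apply: fe.
have [jj forest_w] := stack_forest_vertex (exist (kclique eb k) _ kN) eb_simple emb.
pose w : stacked eb k l := inr (exist (kclique eb k) _ kN, jj).
pose g u := if u == v then w else inl (f u).
have g_out u : u \in S :\ v -> g u = inl (f u) by rewrite /g !inE => /andP [/negPf ->].
have N_f u : u \in S :\ v -> (f u \in f @: N) = e v u.
  move=> uS; apply/imsetP/idP => [[a aN fua] | evu].
    have aS := subsetP sNS a aN.
    by move: aN; rewrite -(f_inj u a uS aS fua) inE => /andP [].
  by exists u; rewrite // inE evu andbT; case/setD1P: uS.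
have g_v : g v = w by rewrite /g eqxx.
exists g; split.
- move=> a b aS bS; case: (eqVneq a v) => [-> | av]; case: (eqVneq b v) => [-> | bv] //.
  + by rewrite g_v g_out // !inE bv.
  + by rewrite g_v g_out // !inE av.
  + by rewrite !g_out ?inE ?av ?bv // => -[]; apply: f_inj; rewrite !inE ?av ?bv.
- move=> a b aS bS; case: (eqVneq a v) => [-> | av]; case: (eqVneq b v) => [-> | bv].
  + by rewrite e_irr g_v.
  + by rewrite g_v g_out /= ?N_f // !inE bv.
  + by rewrite e_sym g_v g_out /= ?N_f // !inE av.
  + by rewrite !g_out /= ?fe // !inE ?av ?bv.
move=> i; apply: acyclic_onS _ (forest_w _ f_forest i).
apply/subsetP => _ /imsetP [u uS ->]; rewrite /g; case: eqP => [_ | /eqP uv].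
  by rewrite setU11.
by rewrite setU1r // imset_f // imset_f // !inE uv.
Qed.

Lemma ktree_on_forces_forest_embedding (T : finType) (e : rel T) (k l : nat)
    (S : {set T}) :
  simple_graph e -> ktree_on e k S -> forces_forest_embedding e k l S.
Proof.
move=> e_simple; elim=> {S} [S | S v vS _]; last exact: forces_forest_embedding_stack.
exact: forces_forest_embedding_clique e_simple.2.
Qed.

Theorem lemma2 (k l : nat) (T : finType) (e : rel T) :
  1 <= k -> is_ktree e k ->
  exists (Tb : finType) (eb : rel Tb),
    is_ktree eb k /\
    forall (ord : Tb -> nat) (p : Tb -> Tb -> nat),
      local_book_embedding l eb ord p ->
      contains_forest_embedding e eb ord p.
Proof.
move=> _ [e_simple kt].
have [Tb [eb [eb_kt forest]]] := ktree_on_forces_forest_embedding l e_simple kt.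
exists Tb, eb; split=> // ord p emb; have [f [f_inj fe f_forest]] := forest _ _ emb.
exists f; split=> [a b | a b | i]; first by apply: f_inj; rewrite inE.
  by apply: fe; rewrite inE.
apply: acyclic_onS _ (f_forest i).
by apply/subsetP => _ /imsetP [u _ ->]; rewrite imset_f.
Qed.
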